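(* Let the Algorithm and assumptions (A1)–(A4) be as in the context, with constants $L_H,K_H,\delta_g,\delta_H,\nu$. Let $k$ be an iteration at which the algorithm has not stopped, and suppose $\sigma_k\ge 2L_H$ and $\delta_g\le\frac{9\delta_H^2}{4\sigma_k}$. If either (a) $\|G_k\|>\varepsilon_g$ and $\delta_H\le\min\{\frac1{18},\frac{1-\rho_{TH}}{9}\}\big(\sqrt{K_H^2+4\sigma_k\varepsilon_g}-K_H\big)$, or (b) $\lambda_{\min}(H_k)<-\varepsilon_H$ and $\delta_H\le\min\{\frac19,\frac{2(1-\rho_{TH})}{9}\}\nu\varepsilon_H$, then $\rho_k\ge\rho_{TH}$, so that $\sigma_{k+1}=\sigma_k/\gamma$.
   Context: Let $\mathcal M$ be a connected complete Riemannian manifold; $\langle\cdot,\cdot\rangle$ and $\|\cdot\|$ denote the inner product and norm on tangent spaces $T_x\mathcal M$. Let $f=\frac1n\sum_{i=1}^n f_i$ with each $f_i:\mathcal M\to\mathbb R$ twice continuously differentiable; $\mathrm{grad} f$ is the Riemannian gradient. A retraction is a smooth map $R:T\mathcal M\to\mathcal M$ whose restriction $R_x$ to $T_x\mathcal M$ satisfies $R_x(0_x)=x$, $DR_x(0_x)=\mathrm{Id}$. $\nabla^2 f\circ R_x(0_x)$ is the Hessian at $0_x$ of $f\circ R_x$ on the inner-product space $T_x\mathcal M$ (a self-adjoint operator). For a self-adjoint operator $H$ on a tangent space, $\lambda_{\min}(H)$ is its smallest eigenvalue. Algorithm: fix $\varepsilon_g,\varepsilon_H,\rho_{TH}\in(0,1)$,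 $\gamma>1$, $x_0\in\mathcal M$, $\sigma_0>0$. At iteration $k$: construct $G_k\in T_{x_k}\mathcal M$ and self-adjoint linear $H_k$ on $T_{x_k}\mathcal M$; if $\|G_k\|\le\varepsilon_g$ and $\lambda_{\min}(H_k)\ge-\varepsilon_H$, stop; otherwise choose $\eta_k\in T_{x_k}\mathcal M$ approximately minimizing $m_k(\eta):=\langle G_k,\eta\rangle+\frac12\langle H_k[\eta],\eta\rangle+\frac13\sigma_k\|\eta\|^3$, set $\rho_k=\frac{f(x_k)-f\circ R_{x_k}(\eta_k)}{-m_k(\eta_k)}$; if $\rho_k\ge\rho_{TH}$ set $x_{k+1}=R_{x_k}(\eta_k)$, $\sigma_{k+1}=\sigma_k/\gamma$, else $x_{k+1}=x_k$, $\sigma_{k+1}=\gamma\sigma_k$. Cauchy point and eigenpoint: $\eta_k^C:=-\alpha^C G_k$ with $\alpha^C\in\arg\min_{\alpha\ge0}m_k(-\alpha G_k)$. Fix $\nu\in(0,1)$. When $\lambda_{\min}(H_k)<0$, $\eta_k^E:=\alpha^E u_k$ where $u_k\in T_{x_k}\mathcal M$ satisfies $\langle u_k,H_k[u_k]\rangle\le\nu\lambda_{\min}(H_k)\|u_k\|^2<0$ and $\langle G_k,u_k\rangle\le0$, and $\alpha^E\in\arg\min_{\alpha\ge0}m_k(\alpha u_k)$ (so $\langle\eta_k^E,H_k[\eta_k^E]\rangle\le\nu\lambda_{\min}(H_k)\|\eta_k^E\|^2$). Assumptions: (A1) there is $L_H>0$ with $\big|f\circ R_{x_k}(\eta_k)-f(x_k)-\langle\mathrm{grad}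 f(x_k),\eta_k\rangle-\frac12\langle\nabla^2 f\circ R_{x_k}(0_{x_k})[\eta_k],\eta_k\rangle\big|\le\frac12L_H\|\eta_k\|^3$ for all $k$. (A2) there is $K_H>0$ with $\|H_k\|:=\sup_{\eta\in T_{x_k}\mathcal M,\|\eta\|\le1}\langle\eta,H_k[\eta]\rangle\le K_H$ for all $k$. (A3) there are $\delta_g,\delta_H\in(0,1)$ with $\|G_k-\mathrm{grad} f(x_k)\|\le\delta_g$ and $\|(H_k-\nabla^2 f\circ R_{x_k}(0_{x_k}))[\eta_k]\|\le\delta_H\|\eta_k\|$ for all $k$. (A4) for all $k$, $-m_k(\eta_k)\ge-m_k(\eta_k^C)$, and $-m_k(\eta_k)\ge-m_k(\eta_k^E)$ whenever $\lambda_{\min}(H_k)<0$. *)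

(* One iteration k of the Riemannian adaptive-regularization
   method, stated on the inner-product space T_{x_k}M, identified (via an
   orthonormal basis) with 'rV[R]_n and the Euclidean inner product. *)
From mathcomp Require Import all_boot all_order all_algebra.
From mathcomp Require Import reals.
Set Implicit Arguments. Unset Strict Implicit. Unset Printing Implicit Defensive.
Import Order.TTheory GRing.Theory Num.Theory.
Local Open Scope ring_scope.

Section Defs.
Variables (R : realType) (n : nat).

Definition ip (u v : 'rV[R]_n) : R := (u *m v^T) 0 0.
Definition vnorm (u : 'rV[R]_n) : R := Num.sqrt (ip u u).
Definition app (A : 'M[R]_n) (u : 'rV[R]_n) : 'rV[R]_n := u *m A^T.
Definition selfadj (A : 'M[R]_n) : Prop := A^T = A.
Definition is_lambda_min (A : 'M[R]_n) (l : R) : Prop :=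
  eigenvalue A l /\ forall m, eigenvalue A m -> l <= m.
Definition model (G : 'rV[R]_n) (H : 'M[R]_n) (sigma : R) (eta : 'rV[R]_n) : R :=
  ip G eta + 2^-1 * ip (app H eta) eta + 3^-1 * sigma * vnorm eta ^+ 3.
Definition is_argmin_nonneg (phi : R -> R) (a : R) : Prop :=
  0 <= a /\ forall b, 0 <= b -> phi a <= phi b.
(* operator "norm" of (A2): sup_{||eta||<=1} <eta, A[eta]> <= K *)
Definition opnorm_le (A : 'M[R]_n) (K : R) : Prop :=
  forall eta, vnorm eta <= 1 -> ip eta (app A eta) <= K.
Definition sigma_next (rho rhoTH gamma sigma : R) : R :=
  if rhoTH <= rho then sigma / gamma else gamma * sigma.
End Defs.

(* The actual reduction f(x_k) - f(R(eta)) falls short of the predicted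
   reduction -m_k(eta) by at most delta_g t + delta_H t^2 / 2 - sigma t^3 / 12,
   t = ||eta||, by (A1), (A3) and sigma >= 2 L_H; when
   delta_g <= 9 delta_H^2 / (4 sigma) this cubic in t never exceeds
   18 delta_H^3 / sigma^2.  By (A4) the predicted reduction is at least the
   Cauchy decrease 2/3 sigma b^3, b the positive root of
   sigma b^2 + K_H b = ||G_k||, or the eigenpoint decrease
   (nu |lambda_min|)^3 / (6 sigma^2), and the bounds on delta_H make
   18 delta_H^3 / sigma^2 at most (1 - rho_TH) times that decrease,
   so rho_k >= rho_TH. *)

From mathcomp Require Import all_boot all_order all_algebra.
From mathcomp Require Import reals.
From mathcomp Require Import ring lra.
Set Implicit Arguments. Unset Strict Implicit. Unset Printing Implicit Defensive.
Import Order.TTheory GRing.Theory Num.Theory.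
Local Open Scope ring_scope.

Section InnerProduct.
Variables (R : realType) (n : nat).
Implicit Types (u v w : 'rV[R]_n) (A B : 'M[R]_n) (a : R).

Lemma ipC u v : ip u v = ip v u.
Proof. by rewrite /ip -[v in RHS]trmxK -trmx_mul [RHS]mxE. Qed.

Lemma ip0l w : ip 0 w = 0.
Proof. by rewrite /ip mul0mx mxE. Qed.

Lemma ipDl u v w : ip (u + v) w = ip u w + ip v w.
Proof. by rewrite /ip mulmxDl mxE. Qed.

Lemma ipNl u w : ip (- u) w = - ip u w.
Proof. by rewrite /ip mulNmx mxE. Qed.

Lemma ipBl u v w : ip (u - v) w = ip u w - ip v w.
Proof. by rewrite ipDl ipNl. Qed.

Lemma ipZl a u w : ip (a *: u) w = a * ip u w.
Proof. by rewrite /ip -scalemxAl mxE. Qed.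

Lemma ipDr u v w : ip w (u + v) = ip w u + ip w v.
Proof. by rewrite ipC ipDl !(ipC w). Qed.

Lemma ipNr u w : ip w (- u) = - ip w u.
Proof. by rewrite ipC ipNl ipC. Qed.

Lemma ipZr a u w : ip w (a *: u) = a * ip w u.
Proof. by rewrite ipC ipZl ipC. Qed.

Lemma ip_sqr u : ip u u = \sum_j u 0 j ^+ 2.
Proof. by rewrite /ip mxE; apply: eq_bigr => j _; rewrite mxE expr2. Qed.

Lemma ip_ge0 u : 0 <= ip u u.
Proof. by rewrite ip_sqr sumr_ge0 // => j _; rewrite sqr_ge0. Qed.

Lemma ip_eq0 u : (ip u u == 0) = (u == 0).
Proof.
apply/eqP/eqP => [u0|->]; last exact: ip0l.
apply/rowP => j; rewrite mxE; apply/eqP; rewrite -sqrf_eq0; apply/eqP.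
rewrite ip_sqr in u0.
exact: (psumr_eq0P (fun i _ => sqr_ge0 (u 0 i)) u0).
Qed.

Lemma vnorm_ge0 u : 0 <= vnorm u.
Proof. exact: sqrtr_ge0. Qed.

Lemma vnorm_sqr u : vnorm u ^+ 2 = ip u u.
Proof. by rewrite sqr_sqrtr // ip_ge0. Qed.

Lemma vnorm_eq0 u : (vnorm u == 0) = (u == 0).
Proof. by rewrite sqrtr_eq0 -ip_eq0 eq_le ip_ge0 andbT. Qed.

Lemma vnorm0 : vnorm (0 : 'rV[R]_n) = 0.
Proof. by apply/eqP; rewrite vnorm_eq0. Qed.

Lemma vnorm_gt0 u : (0 < vnorm u) = (u != 0).
Proof. by rewrite lt_def vnorm_eq0 vnorm_ge0 andbT. Qed.

Lemma vnormZ a u : vnorm (a *: u) = `|a| * vnorm u.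
Proof. by rewrite /vnorm ipZl ipZr mulrA -expr2 sqrtrM ?sqr_ge0 // sqrtr_sqr. Qed.

Lemma vnormN u : vnorm (- u) = vnorm u.
Proof. by rewrite /vnorm ipNl ipNr opprK. Qed.

Lemma CauchySchwarz_ge u v : - (vnorm u * vnorm v) <= ip u v.
Proof.
have [->|u0] := eqVneq u 0; first by rewrite ip0l vnorm0 mul0r oppr0.
have [->|v0] := eqVneq v 0; first by rewrite ipC ip0l vnorm0 mulr0 oppr0.
have ab0 : 0 < vnorm u * vnorm v by rewrite mulr_gt0 ?vnorm_gt0.
(* expand |v| u + |u| v, whose squared norm is 2 |u| |v| (|u| |v| + <u, v>) *)
have := ip_ge0 (vnorm v *: u + vnorm u *: v).
rewrite !(ipDl, ipDr, ipZl, ipZr) (ipC v u) -!vnorm_sqr; nra.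
Qed.

Lemma appB A B u : app (A - B) u = app A u - app B u.
Proof. by rewrite /app linearB /= mulmxBr. Qed.

Lemma appN A u : app A (- u) = - app A u.
Proof. by rewrite /app mulNmx. Qed.

Lemma appZ A a u : app A (a *: u) = a *: app A u.
Proof. by rewrite /app scalemxAl. Qed.

Lemma opnorm_le_ip A K u : opnorm_le A K -> ip u (app A u) <= K * vnorm u ^+ 2.
Proof.
move=> hA; have [->|u0] := eqVneq u 0.
  by rewrite ip0l vnorm0 expr0n mulr0.
have g0 : 0 < vnorm u by rewrite vnorm_gt0.
have := hA ((vnorm u)^-1 *: u).
rewrite vnormZ ger0_norm ?invr_ge0 ?(ltW g0) // mulVf ?gt_eqF // lexx.
rewrite appZ ipZl ipZr mulrA -invfM -expr2 mulrC => /(_ isT).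
by rewrite ler_pdivrMr ?exprn_gt0.
Qed.

End InnerProduct.

Section CubicModel.
Variables (R : realType) (n : nat).
Implicit Types (G d : 'rV[R]_n) (H : 'M[R]_n).

Lemma model_scale G H (sigma a : R) d : 0 <= a ->
  model G H sigma (a *: d) =
  a * ip G d + a ^+ 2 / 2 * ip d (app H d) + sigma / 3 * a ^+ 3 * vnorm d ^+ 3.
Proof.
move=> a0; rewrite /model appZ ipZl !ipZr vnormZ ger0_norm // (ipC (app H d)).
ring.
Qed.

(* The nonnegative root [b] of [sigma b^2 + K b = g]. *)
Definition cauchy_root (K sigma g : R) : R :=
  (Num.sqrt (K ^+ 2 + 4 * sigma * g) - K) / (2 * sigma).

Lemma cauchy_rootP (K sigma g : R) : 0 < sigma -> 0 <= g ->
  K * cauchy_root K sigma g + sigma * cauchy_root K sigma g ^+ 2 = g.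
Proof.
move=> s0 g0; rewrite /cauchy_root; set S := Num.sqrt _.
have S2 : S ^+ 2 = K ^+ 2 + 4 * sigma * g.
  by rewrite sqr_sqrtr // addr_ge0 ?sqr_ge0 // !mulr_ge0 // ltW.
have -> : K * ((S - K) / (2 * sigma)) + sigma * ((S - K) / (2 * sigma)) ^+ 2
    = (S ^+ 2 - K ^+ 2) / (4 * sigma) by field; rewrite gt_eqF.
by rewrite S2; field; rewrite gt_eqF.
Qed.

Lemma cauchy_root_gt0 (K sigma g : R) : 0 < sigma -> 0 <= K -> 0 < g ->
  0 < cauchy_root K sigma g.
Proof.
move=> s0 K0 g0; apply: divr_gt0; last by rewrite mulr_gt0.
rewrite subr_gt0 -{1}(ger0_norm K0) -sqrtr_sqr ltr_sqrt.
  by rewrite ltrDl !mulr_gt0.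
by rewrite ltr_wpDl ?sqr_ge0 // !mulr_gt0.
Qed.

Lemma ler_cauchy_root (K sigma g1 g2 : R) : 0 < sigma -> 0 <= g1 -> g1 <= g2 ->
  cauchy_root K sigma g1 <= cauchy_root K sigma g2.
Proof.
move=> s0 g10 g12; rewrite ler_pM2r ?invr_gt0 ?mulr_gt0 // lerD2r ler_sqrt.
  by rewrite lerD2l ler_wpM2l // mulr_ge0 // ltW.
by rewrite addr_ge0 ?sqr_ge0 // !mulr_ge0 ?(ltW s0) // (le_trans g10 g12).
Qed.

Lemma cauchy_decrease G H (sigma K beta alphaC : R) :
  0 < sigma -> 0 <= K -> 0 <= beta -> 0 < vnorm G -> opnorm_le H K ->
  K * beta + sigma * beta ^+ 2 = vnorm G ->
  is_argmin_nonneg (fun a => model G H sigma (- (a *: G))) alphaC ->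
  2 / 3 * sigma * beta ^+ 3 <= - model G H sigma (- (alphaC *: G)).
Proof.
move=> s0 K0 b0 g0 hH hb [_ hmin]; set g := vnorm G in g0 hb *.
have a0 : 0 <= beta / g by rewrite divr_ge0 // ltW.
suff : model G H sigma (- ((beta / g) *: G)) <= - (2 / 3 * sigma * beta ^+ 3).
  by have /= := hmin _ a0; lra.
rewrite -scalerN model_scale // appN !(ipNr, ipNl) opprK -vnorm_sqr vnormN -/g.
have hQ : (beta / g) ^+ 2 / 2 * ip G (app H G) <= K * beta ^+ 2 / 2.
  apply: le_trans (ler_wpM2l _ (opnorm_le_ip G hH)) _.
    by rewrite mulr_ge0 ?sqr_ge0 ?invr_ge0.
  by rewrite -/g le_eqVlt; apply/orP; left; apply/eqP; field; rewrite gt_eqF.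
have -> : beta / g * - g ^+ 2 = - (beta * g) by field; rewrite gt_eqF.
have -> : sigma / 3 * (beta / g) ^+ 3 * g ^+ 3 = sigma / 3 * beta ^+ 3.
  by field; rewrite gt_eqF.
have hbg : beta * g = K * beta ^+ 2 + sigma * beta ^+ 3 by rewrite -hb; ring.
have : 0 <= K * beta ^+ 2 by rewrite mulr_ge0 ?sqr_ge0.
lra.
Qed.

Lemma eigen_decrease G H (sigma mu alphaE : R) u :
  0 < sigma -> 0 < mu -> u != 0 -> ip u (app H u) <= - mu * vnorm u ^+ 2 ->
  ip G u <= 0 -> is_argmin_nonneg (fun a => model G H sigma (a *: u)) alphaE ->
  mu ^+ 3 / sigma ^+ 2 / 6 <= - model G H sigma (alphaE *: u).
Proof.
move=> s0 m0 u0 hHu hGu [_ hmin]; set w := vnorm u in hHu *.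
have w0 : 0 < w by rewrite vnorm_gt0.
have a0 : 0 <= mu / (sigma * w) by rewrite divr_ge0 ?mulr_ge0 ?ltW.
suff : model G H sigma ((mu / (sigma * w)) *: u) <= - (mu ^+ 3 / sigma ^+ 2 / 6).
  by have /= := hmin _ a0; lra.
rewrite model_scale // -/w.
have hG : mu / (sigma * w) * ip G u <= 0 by rewrite mulr_ge0_le0.
have hH : (mu / (sigma * w)) ^+ 2 / 2 * ip u (app H u) <= - (mu ^+ 3 / sigma ^+ 2 / 2).
  apply: le_trans (ler_wpM2l _ hHu) _; first by rewrite mulr_ge0 ?sqr_ge0 ?invr_ge0.
  by rewrite le_eqVlt; apply/orP; left; apply/eqP; field; rewrite !gt_eqF.
have -> : sigma / 3 * (mu / (sigma * w)) ^+ 3 * w ^+ 3 = mu ^+ 3 / sigma ^+ 2 / 3.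
  by field; rewrite !gt_eqF.
lra.
Qed.

End CubicModel.

Section Acceptance.
Variable R : realType.

Definition cubic_error (dg dH sigma t : R) : R :=
  dg * t + dH / 2 * t ^+ 2 - sigma / 12 * t ^+ 3.

Lemma model_error n (fx fR L_H dg dH sigma : R) (gradf G eta : 'rV[R]_n)
    (Hess H : 'M[R]_n) :
  `|fR - fx - ip gradf eta - 2^-1 * ip (app Hess eta) eta|
      <= 2^-1 * L_H * vnorm eta ^+ 3 ->
  vnorm (G - gradf) <= dg -> vnorm (app (H - Hess) eta) <= dH * vnorm eta ->
  2 * L_H <= sigma ->
  - cubic_error dg dH sigma (vnorm eta) <= (fx - fR) - (- model G H sigma eta).
Proof.
set t := vnorm eta => A1 Ag AH sL.
move: A1; rewrite ler_norml => /andP[_ A1]; rewrite appB in AH.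
have t0 : 0 <= t by apply: vnorm_ge0.
have eg := CauchySchwarz_ge (G - gradf) eta; rewrite ipBl -/t in eg.
have eH := CauchySchwarz_ge (app (H - Hess) eta) eta; rewrite appB ipBl -/t in eH.
have eg' := ler_wpM2r t0 Ag; have eH' := ler_wpM2r t0 AH.
have : 0 <= (sigma - 2 * L_H) * t ^+ 3 by rewrite mulr_ge0 ?exprn_ge0 ?subr_ge0.
rewrite /cubic_error /model -/t; lra.
Qed.

Lemma cubic_error_le (dg dH sigma t : R) : 0 < sigma -> 0 < dH -> 0 <= t ->
  dg <= 9 * dH ^+ 2 / (4 * sigma) ->
  sigma ^+ 2 * cubic_error dg dH sigma t <= 18 * dH ^+ 3.
Proof.
move=> s0 d0 t0; rewrite ler_pdivlMr ?mulr_gt0 // => hdg.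
have x0 : 0 <= sigma * t by rewrite mulr_ge0 // ltW.
(* with x = sigma t:
   216 dH^3 - 12 sigma^2 cubic_error >= (x - 6 dH)^2 (x + 6 dH) + 9 dH^2 x *)
have h1 : 0 <= (sigma * t - 6 * dH) ^+ 2 * (sigma * t + 6 * dH).
  by rewrite mulr_ge0 ?sqr_ge0 //; lra.
have h2 : 0 <= dH ^+ 2 * (sigma * t) by rewrite mulr_ge0 ?sqr_ge0.
have h3 : 3 * (sigma * t) * (dg * (4 * sigma)) <= 3 * (sigma * t) * (9 * dH ^+ 2).
  by rewrite ler_wpM2l // mulr_ge0.
rewrite /cubic_error; nra.
Qed.

Lemma error_bound_le_decrease (rho dH r sigma M : R) : 0 <= dH -> rho <= 1 -> 0 <= M ->
  dH <= r / 9 -> dH <= 2 * (1 - rho) * r / 9 -> r ^+ 3 <= 6 * (sigma ^+ 2 * M) ->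
  18 * dH ^+ 3 <= (1 - rho) * (sigma ^+ 2 * M).
Proof.
move=> d0 r1 M0 d1 d2 hr.
have d3 : dH ^+ 3 <= (r / 9) ^+ 2 * (2 * (1 - rho) * r / 9).
  rewrite exprSr ler_pM ?sqr_ge0 // lerXn2r // nnegrE; lra.
have : (1 - rho) * r ^+ 3 <= (1 - rho) * (6 * (sigma ^+ 2 * M)).
  by rewrite ler_wpM2l // subr_ge0.
have : 0 <= (1 - rho) * (sigma ^+ 2 * M).
  by rewrite mulr_ge0 ?subr_ge0 // mulr_ge0 ?sqr_ge0.
lra.
Qed.

Lemma gradient_step_decrease n (G : 'rV[R]_n) (H : 'M[R]_n)
    (sigma K eps_g rho dH alphaC M : R) :
  0 < sigma -> 0 <= K -> 0 < eps_g -> eps_g < vnorm G -> opnorm_le H K ->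
  is_argmin_nonneg (fun a => model G H sigma (- (a *: G))) alphaC ->
  - model G H sigma (- (alphaC *: G)) <= M -> 0 <= dH -> rho <= 1 ->
  dH <= Num.min (1/18) ((1 - rho) / 9) * (Num.sqrt (K ^+ 2 + 4 * sigma * eps_g) - K) ->
  0 < M /\ 18 * dH ^+ 3 <= (1 - rho) * (sigma ^+ 2 * M).
Proof.
move=> s0 K0 e0 eG hH hC hM d0 r1.
set b := cauchy_root K sigma (vnorm G); set be := cauchy_root K sigma eps_g.
have g0 : 0 < vnorm G := lt_trans e0 eG.
have b0 : 0 < b := cauchy_root_gt0 s0 K0 g0.
have be0 : 0 < be := cauchy_root_gt0 s0 K0 e0.
have Mb : 2 / 3 * sigma * b ^+ 3 <= M.
  apply: le_trans hM.
  exact: cauchy_decrease s0 K0 (ltW b0) g0 hH (cauchy_rootP K s0 (ltW g0)) hC.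
have M0 : 0 < M.
  have : 0 < sigma * b ^+ 3 by rewrite mulr_gt0 ?exprn_gt0.
  lra.
have hb : sigma ^+ 2 * (sigma * be ^+ 3) <= sigma ^+ 2 * (6 * M).
  rewrite ler_wpM2l ?sqr_ge0 //.
  have : be ^+ 3 <= b ^+ 3.
    apply: lerXn2r; rewrite ?nnegrE ?(ltW be0) ?(ltW b0) //.
    exact: ler_cauchy_root _ s0 (ltW e0) (ltW eG).
  have : 0 <= sigma * b ^+ 3 by rewrite mulr_ge0 ?exprn_ge0 ?ltW.
  nra.
have -> : Num.sqrt (K ^+ 2 + 4 * sigma * eps_g) - K = 2 * (sigma * be).
  by rewrite /be /cauchy_root; field; rewrite gt_eqF.
have sbe0 : 0 <= 2 * (sigma * be).
  by apply: mulr_ge0 => //; apply: mulr_ge0; apply: ltW.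
rewrite minr_pMl // le_min => /andP[d1 d2].
by split => //; apply: (error_bound_le_decrease (r := sigma * be)); lra.
Qed.

Lemma curvature_step_decrease n (G u : 'rV[R]_n) (H : 'M[R]_n)
    (sigma mu r rho dH alphaE M : R) :
  0 < sigma -> 0 < r -> r <= mu -> u != 0 ->
  ip u (app H u) <= - mu * vnorm u ^+ 2 -> ip G u <= 0 ->
  is_argmin_nonneg (fun a => model G H sigma (a *: u)) alphaE ->
  - model G H sigma (alphaE *: u) <= M -> 0 <= dH -> rho <= 1 ->
  dH <= Num.min (1/9) (2 * (1 - rho) / 9) * r ->
  0 < M /\ 18 * dH ^+ 3 <= (1 - rho) * (sigma ^+ 2 * M).
Proof.
move=> s0 r0 rmu u0 hHu hGu hE hM d0 r1.
have mu0 : 0 < mu := lt_le_trans r0 rmu.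
have Mmu := le_trans (eigen_decrease s0 mu0 u0 hHu hGu hE) hM.
have M0 : 0 < M by apply: lt_le_trans _ Mmu; rewrite !divr_gt0 ?exprn_gt0.
rewrite ler_pdivrMr // ler_pdivrMr ?exprn_gt0 // in Mmu.
have r3 : r ^+ 3 <= mu ^+ 3 by apply: lerXn2r; rewrite // nnegrE ltW.
rewrite minr_pMl; last exact: ltW.
rewrite le_min => /andP[d1 d2].
by split => //; apply: (error_bound_le_decrease (r := r)); lra.
Qed.

End Acceptance.

(* Data at iteration k:
   fx = f(x_k), fR = f(R_{x_k}(eta)), gradf = grad f(x_k),
   Hess = Hess (f o R_{x_k})(0_{x_k}), G = G_k, H = H_k, eta = eta_k,
   sigma = sigma_k, lmin = lambda_min(H_k),
   alphaC = Cauchy step, (u, alphaE) = eigen-direction and eigen-step. *)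
Theorem lemma3p6 (R : realType) (n : nat)
  (eps_g eps_H rhoTH gamma L_H K_H delta_g delta_H nu : R)
  (fx fR sigma lmin alphaC alphaE : R)
  (gradf G eta u : 'rV[R]_n) (Hess H : 'M[R]_n) :
  0 < eps_g < 1 -> 0 < eps_H < 1 -> 0 < rhoTH < 1 -> 1 < gamma ->
  0 < nu < 1 -> 0 < L_H -> 0 < K_H -> 0 < delta_g < 1 -> 0 < delta_H < 1 ->
  0 < sigma ->
  selfadj H -> selfadj Hess -> is_lambda_min H lmin ->
  (* (A1) *)
  `|fR - fx - ip gradf eta - 2^-1 * ip (app Hess eta) eta|
      <= 2^-1 * L_H * vnorm eta ^+ 3 ->
  (* (A2) *)
  opnorm_le H K_H ->
  (* (A3) *)
  vnorm (G - gradf) <= delta_g ->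
  vnorm (app (H - Hess) eta) <= delta_H * vnorm eta ->
  (* (A4), Cauchy point *)
  is_argmin_nonneg (fun a => model G H sigma (- (a *: G))) alphaC ->
  - model G H sigma eta >= - model G H sigma (- (alphaC *: G)) ->
  (* (A4), eigenpoint (when lambda_min(H_k) < 0) *)
  (lmin < 0 ->
     [/\ ip u (app H u) <= nu * lmin * vnorm u ^+ 2,
         ip u (app H u) < 0,
         ip G u <= 0,
         is_argmin_nonneg (fun a => model G H sigma (a *: u)) alphaE &
         - model G H sigma eta >= - model G H sigma (alphaE *: u)]) ->
  (* the algorithm has not stopped at iteration k *)
  ~ (vnorm G <= eps_g /\ lmin >= - eps_H) ->
  sigma >= 2 * L_H ->
  delta_g <= 9 * delta_H ^+ 2 / (4 * sigma) ->
  ((vnorm G > eps_g /\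
      delta_H <= Num.min (1/18) ((1 - rhoTH) / 9)
                   * (Num.sqrt (K_H ^+ 2 + 4 * sigma * eps_g) - K_H))
   \/
   (lmin < - eps_H /\
      delta_H <= Num.min (1/9) (2 * (1 - rhoTH) / 9) * nu * eps_H)) ->
  let rho := (fx - fR) / (- model G H sigma eta) in
  rhoTH <= rho /\ sigma_next rho rhoTH gamma sigma = sigma / gamma.
Proof.
move=> /andP[eg0 _] /andP[eH0 _] /andP[_ r1] _ /andP[nu0 _] _ K0 _ /andP[dH0 _] s0
  _ _ _ A1 A2 A3g A3H hC MC Eig _ sL dgle cases rho.
have err := model_error A1 A3g A3H sL.
set M := - model G H sigma eta in err *.
have errb := cubic_error_le s0 dH0 (vnorm_ge0 eta) dgle.
have [M0 dec] : 0 < M /\ 18 * delta_H ^+ 3 <= (1 - rhoTH) * (sigma ^+ 2 * M).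
  case: cases => [[gG dle] | [lneg dle]].
    exact: gradient_step_decrease s0 (ltW K0) eg0 gG A2 hC MC (ltW dH0) (ltW r1) dle.
  have lmin0 : lmin < 0 by lra.
  have [hu1 hu2 hGu hE ME] := Eig lmin0.
  have u0 : u != 0 by apply: contraTneq hu2 => ->; rewrite ip0l ltxx.
  rewrite -mulrA in dle.
  apply: (curvature_step_decrease (mu := - (nu * lmin))) s0 _ _ u0 _ hGu hE ME
    (ltW dH0) (ltW r1) dle.
  - by rewrite mulr_gt0.
  - by rewrite -mulrN ler_wpM2l ?(ltW nu0) //; lra.
  - by rewrite opprK.
have errM : cubic_error delta_g delta_H sigma (vnorm eta) <= (1 - rhoTH) * M.
  by rewrite -(ler_pM2l (exprn_gt0 2 s0)) mulrCA (le_trans errb).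
have hr : rhoTH <= rho by rewrite /rho -/M ler_pdivlMr //; lra.
by split => //; rewrite /sigma_next hr.
Qed.
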